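(* Let $\mathsf{V}$ be a congruence distributive variety of $\mathcal{L}$-algebras that has the congruence extension property and parametrically definable principal congruences. If $\mathrm{Th}(\mathsf{V})$ has a model completion, then $\mathsf{V}$ has equationally definable principal congruences.
   Context: $\mathcal{L}$ is an algebraic first-order language with at least one constant symbol. A model completion of a theory $T$ is a model complete theory $T^*$ with the same universal consequences as $T$ such that for every model $M$ of $T$, $T^*$ plus the diagram of $M$ is complete. $\mathrm{Cg}^{\mathbf{A}}(b_1,b_2)$ is the congruence of $\mathbf{A}$ generated by $(b_1,b_2)$. Congruence extension property: for every $\mathbf{A}\in\mathsf{V}$, every congruence of a subalgebra of $\mathbf{A}$ is the restriction of a congruence of $\mathbf{A}$. Parametrically definable principal congruences: there is a quantifier-free formula $\xi(x_1,x_2,y_1,y_2,\overline{z})$ such that for every $\mathbf{A}\in\mathsf{V}$ and $a_1,a_2,b_1,b_2\in A$, $(a_1,a_2)\in\mathrm{Cg}^{\mathbf{A}}(b_1,b_2)$ iff every $\mathbf{B}\in\mathsf{V}$ extending $\mathbf{A}$ satisfies $\forall\overline{z}.\xi(a_1,a_2,b_1,b_2,\overline{z})$. Equationally definable principal congruences: there is a conjunction of equations $\alpha(x_1,x_2,y_1,y_2)$ with $(a_1,a_2)\in\mathrm{Cg}^{\mathbf{A}}(b_1,b_2)$ iff $\mathbf{A}\models\alpha(a_1,a_2,b_1,b_2)$ for all $\mathbf{A}\in\mathsf{V}$ and $a_1,a_2,b_1,b_2\in A$. *)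

From mathcomp Require Import all_boot.
From Stdlib Require List.
Import List.ListNotations.

Set Implicit Arguments.
Unset Strict Implicit.
Unset Printing Implicit Defensive.

Record signature := Signature { sym : Type; ar : sym -> nat }.

Section UA.
Variable L : signature.

Record algebra := Algebra {
  carrier :> Type;
  op : forall f : sym L, ('I_(ar f) -> carrier) -> carrier }.
Arguments op {a} f _.

Inductive term : Type :=
  | Var : nat -> term
  | App : forall f : sym L, ('I_(ar f) -> term) -> term.

Fixpoint eval (A : algebra) (v : nat -> A) (t : term) : A :=
  match t with
  | Var n => v n
  | App f args => op f (fun i => eval v (args i))
  end.

Fixpoint term_vars_in (P : nat -> Prop) (t : term) : Prop :=
  match t with
  | Var n => P n
  | App f args => forall i, term_vars_in P (args i)
  end.

Inductive formula : Type :=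
  | FEq : term -> term -> formula
  | FFalse : formula
  | FNot : formula -> formula
  | FAnd : formula -> formula -> formula
  | FOr : formula -> formula -> formula
  | FImp : formula -> formula -> formula
  | FAll : nat -> formula -> formula
  | FEx : nat -> formula -> formula.

Definition upd (A : Type) (v : nat -> A) (x : nat) (a : A) : nat -> A :=
  fun n => if n == x then a else v n.

Fixpoint sat (A : algebra) (v : nat -> A) (phi : formula) : Prop :=
  match phi with
  | FEq t1 t2 => eval v t1 = eval v t2
  | FFalse => False
  | FNot p => ~ sat v p
  | FAnd p q => sat v p /\ sat v q
  | FOr p q => sat v p \/ sat v q
  | FImp p q => sat v p -> sat v q
  | FAll x p => forall a : A, sat (upd v x a) p
  | FEx x p => exists a : A, sat (upd v x a) p
  end.

Fixpoint qfree (phi : formula) : Prop :=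
  match phi with
  | FEq _ _ | FFalse => True
  | FNot p => qfree p
  | FAnd p q | FOr p q | FImp p q => qfree p /\ qfree q
  | FAll _ _ | FEx _ _ => False
  end.

Fixpoint fv_in (P : nat -> Prop) (phi : formula) : Prop :=
  match phi with
  | FEq t1 t2 => term_vars_in P t1 /\ term_vars_in P t2
  | FFalse => True
  | FNot p => fv_in P p
  | FAnd p q | FOr p q | FImp p q => fv_in P p /\ fv_in P q
  | FAll x p | FEx x p => fv_in (fun n => n = x \/ P n) p
  end.

Definition sentence (phi : formula) : Prop := fv_in (fun _ => False) phi.

Inductive universal : formula -> Prop :=
  | univ_qf : forall p, qfree p -> universal p
  | univ_all : forall x p, universal p -> universal (FAll x p).

Definition theory := formula -> Prop.

Definition models (A : algebra) (T : theory) : Prop :=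
  forall phi, T phi -> forall v : nat -> A, sat v phi.

Definition entails (T : theory) (phi : formula) : Prop :=
  forall A : algebra, models A T -> forall v : nat -> A, sat v phi.

Definition Th (K : algebra -> Prop) : theory :=
  fun phi => sentence phi /\ forall A, K A -> forall v : nat -> A, sat v phi.

(* Embeddings (= injective homomorphisms, the language being algebraic). *)
Definition hom (A B : algebra) (h : A -> B) : Prop :=
  forall (f : sym L) (args : 'I_(ar f) -> A), h (op f args) = op f (fun i => h (args i)).

Definition embedding (A B : algebra) (h : A -> B) : Prop :=
  hom h /\ forall x y, h x = h y -> x = y.

Definition elementary (A B : algebra) (h : A -> B) : Prop :=
  forall (phi : formula) (v : nat -> A), sat v phi <-> sat (fun n => h (v n)) phi.

Definition model_complete (T : theory) : Prop :=
  forall (M N : algebra) (h : M -> N),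
    models M T -> models N T -> embedding h -> elementary h.

(* T' is a model completion of T:
   - T' is a theory (set of sentences) which is model complete,
   - T and T' have the same universal consequences,
   - for every model M of T, T' + diagram(M) is complete, i.e. for every
     L(M)-sentence (a formula phi with its free variables instantiated by
     parameters v from M), either every model of T' + diag(M) satisfies it or
     every such model satisfies its negation.  A model of T' + diag(M) is a
     model N of T' together with an embedding e : M -> N. *)
Definition model_completion (T T' : theory) : Prop :=
  [/\ (forall phi, T' phi -> sentence phi),
      model_complete T',
      (forall phi, sentence phi -> universal phi -> (entails T phi <-> entails T' phi))
    & (forall M : algebra, models M T ->
         forall (phi : formula) (v : nat -> M),
           (forall (N : algebra) (e : M -> N), models N T' -> embedding e ->
               sat (fun n => e (v n)) phi)
           \/
           (forall (N : algebra) (e : M -> N), models N T' -> embedding e ->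
               ~ sat (fun n => e (v n)) phi))].

Definition is_variety (V : algebra -> Prop) : Prop :=
  exists E : term * term -> Prop,
    forall A : algebra,
      V A <-> (forall e, E e -> forall v : nat -> A, eval v e.1 = eval v e.2).

Definition is_congruence (A : algebra) (th : A -> A -> Prop) : Prop :=
  [/\ (forall x, th x x),
      (forall x y, th x y -> th y x),
      (forall x y z, th x y -> th y z -> th x z)
    & (forall (f : sym L) (a b : 'I_(ar f) -> A),
         (forall i, th (a i) (b i)) -> th (op f a) (op f b))].

Definition Cg (A : algebra) (b1 b2 : A) : A -> A -> Prop :=
  fun x y => forall th, is_congruence th -> th b1 b2 -> th x y.

Definition cmeet (A : algebra) (th ps : A -> A -> Prop) : A -> A -> Prop :=
  fun x y => th x y /\ ps x y.

Definition cjoin (A : algebra) (th ps : A -> A -> Prop) : A -> A -> Prop :=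
  fun x y => forall ch : A -> A -> Prop, is_congruence ch ->
    (forall u w, th u w -> ch u w) -> (forall u w, ps u w -> ch u w) -> ch x y.

Definition con_distributive_alg (A : algebra) : Prop :=
  forall th ph ps : A -> A -> Prop,
    is_congruence th -> is_congruence ph -> is_congruence ps ->
    forall x y, cmeet th (cjoin ph ps) x y <-> cjoin (cmeet th ph) (cmeet th ps) x y.

Definition congruence_distributive (V : algebra -> Prop) : Prop :=
  forall A, V A -> con_distributive_alg A.

(* Congruence extension property; a subalgebra B of A is given up to
   isomorphism by an embedding h : B -> A. *)
Definition CEP (V : algebra -> Prop) : Prop :=
  forall (A B : algebra) (h : B -> A), V A -> embedding h ->
    forall th : B -> B -> Prop, is_congruence th ->
      exists Ph : A -> A -> Prop, is_congruence Ph /\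
        forall x y, th x y <-> Ph (h x) (h y).

(* Parametrically definable principal congruences.  Variables: x1,x2,y1,y2 are
   x_0,x_1,x_2,x_3; all other variables of xi play the role of z-bar and are
   universally quantified. *)
Definition PDPC (V : algebra -> Prop) : Prop :=
  exists xi : formula, qfree xi /\
    forall A : algebra, V A -> forall a1 a2 b1 b2 : A,
      Cg b1 b2 a1 a2 <->
      (forall (B : algebra) (h : A -> B), V B -> embedding h ->
         forall v : nat -> B, v 0 = h a1 -> v 1 = h a2 -> v 2 = h b1 -> v 3 = h b2 ->
           sat v xi).

Definition val4 (A : Type) (a1 a2 b1 b2 : A) : nat -> A :=
  fun n => match n with 0 => a1 | 1 => a2 | 2 => b1 | _ => b2 end.

Definition EDPC (V : algebra -> Prop) : Prop :=
  exists alpha : list (term * term),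
    List.Forall (fun e => term_vars_in (fun n => n < 4) e.1 /\
                     term_vars_in (fun n => n < 4) e.2) alpha /\
    forall A : algebra, V A -> forall a1 a2 b1 b2 : A,
      Cg b1 b2 a1 a2 <->
      List.Forall (fun e => eval (val4 a1 a2 b1 b2) e.1 = eval (val4 a1 a2 b1 b2) e.2) alpha.

End UA.

(* Write Cg4(a) for (a0, a1) in Cg(a2, a3), and Sigma ([Cg4_eq]) for the
   equations that hold at every Cg4-tuple of V; the aim is a finite part of
   Sigma forcing Cg4.
   Let T be the model completion.  The finitely generated part of any algebra of
   V embeds in a model of T, and there, by PDPC, CEP and the completeness of T
   plus a diagram, Cg4(w) is equivalent to the universal formula
   "forall z, xi(w, z)" ([xi_all]) in the model itself, so Cg4 is first-order in
   models of T.  Compactness, together with finite products (congruence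
   distributivity) to falsify finitely many equations outside Sigma at once,
   gives a Cg4-tuple satisfying only equations of Sigma.  Mapping the subalgebra
   it generates to any tuple satisfying Sigma transports Cg4 (by CEP), so Sigma
   implies Cg4, and a second compactness argument extracts a finite subset of
   Sigma that suffices. *)

From mathcomp Require Import all_boot.
From mathcomp Require Import boolp classical_sets filter.
From Stdlib Require List.

Set Implicit Arguments.
Unset Strict Implicit.
Unset Printing Implicit Defensive.

Section Algebras.
Variable L : signature.
Notation algebra := (algebra L).
Notation term := (term L).

Definition eqs_incl (A B : algebra) (u : nat -> A) (w : nat -> B) : Prop :=
  forall s t : term, eval u s = eval u t -> eval w s = eval w t.

Definition same_eqs (A B : algebra) (u : nat -> A) (w : nat -> B) : Prop :=
  forall s t : term, eval u s = eval u t <-> eval w s = eval w t.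

Lemma hom_eval (A B : algebra) (h : A -> B) (u : nat -> A) (t : term) :
  hom h -> h (eval u t) = eval (h \o u) t.
Proof.
move=> h_hom; elim: t => [n|f args IH] //=.
by rewrite h_hom; congr op; apply: funext => i; exact: IH.
Qed.

Lemma same_eqs_emb (A B : algebra) (h : A -> B) (u : nat -> A) :
  embedding h -> same_eqs u (h \o u).
Proof.
move=> [h_hom h_inj] s t; rewrite -!hom_eval //.
by split=> [->|/h_inj].
Qed.

Lemma Cg_congruence (A : algebra) (b1 b2 : A) : is_congruence (Cg b1 b2).
Proof.
split.
- by move=> x th [th_refl _ _ _] _; exact: th_refl.
- move=> x y xy th th_cong b12; case: (th_cong) => _ th_sym _ _.
  by apply: th_sym; exact: xy.
- move=> x y z xy yz th th_cong b12; case: (th_cong) => _ _ th_trans _.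
  exact: th_trans (xy _ th_cong b12) (yz _ th_cong b12).
- move=> f a b ab th th_cong b12; case: (th_cong) => _ _ _ th_op.
  by apply: th_op => i; exact: ab.
Qed.

Lemma Cg_base (A : algebra) (b1 b2 : A) : Cg b1 b2 b1 b2.
Proof. by move=> th. Qed.

Lemma kernel_congruence (A B : algebra) (h : A -> B) :
  hom h -> is_congruence (fun x y => h x = h y).
Proof.
move=> h_hom; split=> // [x y z -> //|f a b ab].
by rewrite !h_hom; congr op; apply: funext => i; exact: ab.
Qed.

Lemma Cg_image_mod (A B : algebra) (th : B -> B -> Prop) (g : A -> B)
    (a1 a2 b1 b2 : A) :
  is_congruence th ->
  (forall f (args : 'I_(ar f) -> A), th (g (op args)) (op (fun i => g (args i)))) ->
  th (g b1) (g b2) -> Cg b1 b2 a1 a2 -> th (g a1) (g a2).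
Proof.
move=> [th_refl th_sym th_trans th_op] g_op th_b.
move/(_ (fun x y => th (g x) (g y))); apply => //; split.
- by move=> x; exact: th_refl.
- by move=> x y; exact: th_sym.
- by move=> x y z; exact: th_trans.
- move=> f a b ab; apply: (th_trans _ _ _ (g_op f a)).
  by apply: (th_trans _ _ _ (th_op _ _ _ ab)); exact: th_sym.
Qed.

Lemma Cg_hom (A B : algebra) (h : A -> B) (a1 a2 b1 b2 : A) :
  hom h -> Cg b1 b2 a1 a2 -> Cg (h b1) (h b2) (h a1) (h a2).
Proof.
move=> h_hom; apply: (Cg_image_mod (g := h)); [exact: Cg_congruence| |exact: Cg_base].
by move=> f args; rewrite h_hom => th [th_refl _ _ _] _; exact: th_refl.
Qed.

Lemma CEP_Cg_reflect (V : algebra -> Prop) (A B : algebra) (h : B -> A)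
    (a1 a2 b1 b2 : B) :
  CEP V -> V A -> embedding h ->
  Cg (h b1) (h b2) (h a1) (h a2) -> Cg b1 b2 a1 a2.
Proof.
move=> cep VA h_emb h_Cg.
have [Ph [Ph_cong Ph_restr]] := cep A B h VA h_emb _ (Cg_congruence b1 b2).
by apply/Ph_restr; apply: h_Cg => //; apply/Ph_restr; exact: Cg_base.
Qed.

Lemma variety_sub (V : algebra -> Prop) (A B : algebra) (h : B -> A) :
  is_variety V -> V A -> embedding h -> V B.
Proof.
move=> [E VE] VA [h_hom h_inj]; apply/VE => e Ee v; apply: h_inj.
by rewrite !hom_eval //; exact: (VE A).1 VA e Ee _.
Qed.

Definition prod_alg (A1 A2 : algebra) : algebra :=
  @Algebra L (A1 * A2)%type
    (fun f args => (op (fun i => (args i).1), op (fun i => (args i).2))).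

Lemma eval_prod (A1 A2 : algebra) (u1 : nat -> A1) (u2 : nat -> A2) (t : term) :
  eval (A := prod_alg A1 A2) (fun n => (u1 n, u2 n)) t = (eval u1 t, eval u2 t).
Proof.
elim: t => [n|f args IH] //=.
by congr pair; congr op; apply: funext => i; rewrite IH.
Qed.

Lemma variety_prod (V : algebra -> Prop) (A1 A2 : algebra) :
  is_variety V -> V A1 -> V A2 -> V (prod_alg A1 A2).
Proof.
move=> [E VE] VA1 VA2; apply/VE => e Ee v.
have -> : v = fun n => ((v n).1, (v n).2) by apply: funext => n; exact: surjective_pairing.
by rewrite !eval_prod (VE A1).1 // (VE A2).1.
Qed.

Definition trivial_alg : algebra := @Algebra L unit (fun _ _ => tt).

Lemma variety_trivial (V : algebra -> Prop) : is_variety V -> V trivial_alg.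
Proof.
by move=> [E VE]; apply/VE => e _ v; case: (eval v e.1 : unit); case: (eval v e.2 : unit).
Qed.

Lemma cjoin_congruence (A : algebra) (th ps : A -> A -> Prop) :
  is_congruence (cjoin th ps).
Proof.
split.
- by move=> x ch [ch_refl _ _ _] _ _; exact: ch_refl.
- move=> x y xy ch ch_cong th_ch ps_ch; case: (ch_cong) => _ ch_sym _ _.
  by apply: ch_sym; exact: xy.
- move=> x y z xy yz ch ch_cong th_ch ps_ch; case: (ch_cong) => _ _ ch_trans _.
  exact: ch_trans (xy _ _ _ _) (yz _ _ _ _).
- move=> f a b ab ch ch_cong th_ch ps_ch; case: (ch_cong) => _ _ _ ch_op.
  by apply: ch_op => i; exact: ab.
Qed.

Lemma cjoin_l (A : algebra) (th ps : A -> A -> Prop) x y : th x y -> cjoin th ps x y.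
Proof. by move=> xy ch _ th_ch _; exact: th_ch. Qed.

Lemma cjoin_r (A : algebra) (th ps : A -> A -> Prop) x y : ps x y -> cjoin th ps x y.
Proof. by move=> xy ch _ _ ps_ch; exact: ps_ch. Qed.

Lemma con_distributive_absorb (A : algebra) (th al be : A -> A -> Prop) :
  con_distributive_alg A ->
  is_congruence th -> is_congruence al -> is_congruence be ->
  (forall x y, al x y -> be x y -> th x y) ->
  forall x y, cjoin th al x y -> be x y -> th x y.
Proof.
move=> cd th_cong al_cong be_cong al_be x y xy be_xy.
have /(cd _ _ _ be_cong th_cong al_cong) : cmeet be (cjoin th al) x y by [].
by apply=> // [u w [] | u w [be_uw al_uw]] //; exact: al_be.
Qed.

(* The kernels of the two projections meet in the identity, so by congruence
   distributivity Cg contains the steps (a1, c1) -> (a2, c1) -> (a2, c2). *)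
Lemma prod_Cg (A1 A2 : algebra) (a1 a2 b1 b2 : A1) (c1 c2 d1 d2 : A2) :
  con_distributive_alg (prod_alg A1 A2) ->
  Cg b1 b2 a1 a2 -> Cg d1 d2 c1 c2 ->
  Cg (A := prod_alg A1 A2) (b1, d1) (b2, d2) (a1, c1) (a2, c2).
Proof.
move=> cd ab cd12.
set th := Cg (A := prod_alg A1 A2) _ _.
pose k1 (x y : prod_alg A1 A2) := x.1 = y.1.
pose k2 (x y : prod_alg A1 A2) := x.2 = y.2.
have th_cong : is_congruence th := Cg_congruence _ _.
have k1_cong : is_congruence k1 := kernel_congruence (fun f args => erefl).
have k2_cong : is_congruence k2 := kernel_congruence (fun f args => erefl).
have [th_refl _ th_trans _] := th_cong.
have k12 x y : x.1 = y.1 -> x.2 = y.2 -> th x y.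
  by case: x y => [x1 x2] [y1 y2] /= -> ->; exact: th_refl.
have [_ _ j1_trans _] := cjoin_congruence th k1.
have [_ _ j2_trans _] := cjoin_congruence th k2.
apply: (th_trans _ (a2, c1)).
- apply: (con_distributive_absorb cd th_cong k1_cong k2_cong) => [x y||//].
    exact: k12.
  refine (Cg_image_mod (g := fun a : A1 => (a, c1) : prod_alg A1 A2)
            (cjoin_congruence th k1) _ _ ab).
    by move=> f args; exact: cjoin_r.
  apply: (j1_trans _ (b1, d1)); first exact: cjoin_r.
  by apply: (j1_trans _ (b2, d2)); [apply: cjoin_l; exact: Cg_base | exact: cjoin_r].
- apply: (con_distributive_absorb cd th_cong k2_cong k1_cong) => [x y e2 e1||//].
    exact: k12 e1 e2.
  refine (Cg_image_mod (g := fun c : A2 => (a2, c) : prod_alg A1 A2)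
            (cjoin_congruence th k2) _ _ cd12).
    by move=> f args; exact: cjoin_r.
  apply: (j2_trans _ (b1, d1)); first exact: cjoin_r.
  by apply: (j2_trans _ (b2, d2)); [apply: cjoin_l; exact: Cg_base | exact: cjoin_r].
Qed.

Section GeneratedSubalgebra.
Variables (A : algebra) (u : nat -> A).

Definition gen_carrier := {x : A | exists t : term, x = eval u t}.

Lemma gen_op_closed (f : sym L) (args : 'I_(ar f) -> gen_carrier) :
  exists t : term, op (fun i => sval (args i)) = eval u t.
Proof.
have /(_ _)/cid rep i := svalP (args i).
exists (App (fun i => sval (rep i))) => /=.
by congr op; apply: funext => i; exact: svalP (rep i).
Qed.

Definition gen_alg : algebra :=
  @Algebra L gen_carrier (fun f args => exist _ _ (gen_op_closed args)).

Definition gen_var (n : nat) : gen_alg :=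
  exist _ (u n) (ex_intro _ (Var L n) erefl).

Lemma gen_val_emb : embedding (fun x : gen_alg => sval x).
Proof. by split=> // -[x px] [y py] /= xy; exact: eq_exist. Qed.

Lemma gen_val_eval (t : term) : sval (eval gen_var t) = eval u t.
Proof. by rewrite (hom_eval _ _ gen_val_emb.1). Qed.

Lemma gen_generated (x : gen_alg) : exists t : term, x = eval gen_var t.
Proof.
have [t xt] := svalP x; exists t; apply: gen_val_emb.2.
by rewrite gen_val_eval.
Qed.

Lemma gen_lift (B : algebra) (w : nat -> B) : eqs_incl u w ->
  exists h : gen_alg -> B, hom h /\ forall n, h (gen_var n) = w n.
Proof.
move=> uw; pose rep (x : gen_alg) := sval (cid (svalP x)).
have rep_eval x t : sval x = eval u t -> eval w (rep x) = eval w t.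
  by move=> xt; apply: uw; rewrite -(svalP (cid (svalP x))).
exists (fun x => eval w (rep x)); split=> [f args|n]; last exact: (rep_eval _ (Var L n)).
rewrite (rep_eval _ (App (fun i => rep (args i)))) //=.
by congr op; apply: funext => i; exact: svalP (cid (svalP (args i))).
Qed.

Lemma gen_lift_emb (B : algebra) (w : nat -> B) : same_eqs u w ->
  exists h : gen_alg -> B, embedding h /\ forall n, h (gen_var n) = w n.
Proof.
move=> uw; have [h [h_hom h_var]] := gen_lift (fun s t => (uw s t).1).
have h_eval t : h (eval gen_var t) = eval w t.
  by rewrite hom_eval //; congr eval; apply: funext => n; exact: h_var.
exists h; split=> //; split=> // x y.
have [[s ->] [t ->]] := (gen_generated x, gen_generated y).
rewrite !h_eval => /uw st; apply: gen_val_emb.2.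
by rewrite !gen_val_eval.
Qed.

End GeneratedSubalgebra.

Lemma Cg_transfer (V : algebra -> Prop) (A B : algebra) (a : nat -> A) (w : nat -> B)
    (i j k l : nat) :
  CEP V -> V A -> eqs_incl a w ->
  Cg (a k) (a l) (a i) (a j) -> Cg (w k) (w l) (w i) (w j).
Proof.
move=> cep VA aw a_Cg; have [h [h_hom h_var]] := gen_lift aw.
rewrite -!h_var; apply: Cg_hom h_hom _.
exact: (CEP_Cg_reflect cep VA (gen_val_emb a)).
Qed.

End Algebras.

Section Formulas.
Variable L : signature.
Notation algebra := (algebra L).
Notation term := (term L).
Notation formula := (formula L).

Lemma term_vars_in_mono (P Q : nat -> Prop) (t : term) :
  (forall n, P n -> Q n) -> term_vars_in P t -> term_vars_in Q t.
Proof.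
by move=> PQ; elim: t => [n|f args IH] /=; [exact: PQ | move=> P_args i; exact: IH].
Qed.

Lemma fv_in_mono (P Q : nat -> Prop) (phi : formula) :
  (forall n, P n -> Q n) -> fv_in P phi -> fv_in Q phi.
Proof.
elim: phi P Q => [s t||p IH|p IHp q IHq|p IHp q IHq|p IHp q IHq|x p IH|x p IH] P Q PQ //=.
- by case=> Ps Pt; split; [exact: term_vars_in_mono PQ Ps | exact: term_vars_in_mono PQ Pt].
- exact: IH.
1-3: by case=> Pp Pq; split; [exact: IHp Pp | exact: IHq Pq].
all: by apply: IH => n [->|/PQ]; [left | right].
Qed.

Lemma term_bound (t : term) : exists K, term_vars_in (fun n => n < K) t.
Proof.
elim: t => [n|f args IH] /=; first by exists n.+1.
pose K i := sval (cid (IH i)).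
exists (\max_(i < ar f) K i) => i.
apply: term_vars_in_mono (svalP (cid (IH i))) => n n_lt.
exact: leq_trans n_lt (leq_bigmax i).
Qed.

Lemma qfree_bound (phi : formula) : qfree phi -> exists K, fv_in (fun n => n < K) phi.
Proof.
have le_maxl K1 K2 n : n < K1 -> n < maxn K1 K2 by rewrite leq_max => ->.
have le_maxr K1 K2 n : n < K2 -> n < maxn K1 K2 by rewrite leq_max orbC => ->.
elim: phi => [s t||p IH|p IHp q IHq|p IHp q IHq|p IHp q IHq|//|//] /=.
- move=> _; have [[K1 s_K1] [K2 t_K2]] := (term_bound s, term_bound t).
  exists (maxn K1 K2); split.
    exact: term_vars_in_mono (le_maxl K1 K2) s_K1.
  exact: term_vars_in_mono (le_maxr K1 K2) t_K2.
- by exists 0.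
- exact: IH.
all: move=> [/IHp [K1 p_K1] /IHq [K2 q_K2]]; exists (maxn K1 K2).
all: split; [exact: fv_in_mono (le_maxl K1 K2) p_K1 | exact: fv_in_mono (le_maxr K1 K2) q_K2].
Qed.

Lemma eval_coinc (A : algebra) (P : nat -> Prop) (u w : nat -> A) (t : term) :
  term_vars_in P t -> (forall n, P n -> u n = w n) -> eval u t = eval w t.
Proof.
move=> + uw; elim: t => [n|f args IH] /= Pt; first exact: uw.
by congr op; apply: funext => i; exact: IH.
Qed.

Lemma sat_coinc_qf (A : algebra) (P : nat -> Prop) (u w : nat -> A) (phi : formula) :
  qfree phi -> fv_in P phi -> (forall n, P n -> u n = w n) -> (sat u phi <-> sat w phi).
Proof.
move=> + + uw.
elim: phi => [s t||p IH|p IHp q IHq|p IHp q IHq|p IHp q IHq|//|//] //= qf P_phi.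
- by rewrite (eval_coinc P_phi.1 uw) (eval_coinc P_phi.2 uw).
- by rewrite (IH qf P_phi).
all: by rewrite (IHp qf.1 P_phi.1) (IHq qf.2 P_phi.2).
Qed.

Lemma sat_qf_same_eqs (A B : algebra) (u : nat -> A) (w : nat -> B) (phi : formula) :
  qfree phi -> same_eqs u w -> (sat u phi <-> sat w phi).
Proof.
move=> + uw; elim: phi => [s t||p IH|p IHp q IHq|p IHp q IHq|p IHp q IHq|//|//] //= qf.
- by rewrite (IH qf).
all: by rewrite (IHp qf.1) (IHq qf.2).
Qed.

Definition close (xs : seq nat) (phi : formula) : formula := foldr (@FAll L) phi xs.

Lemma sat_close (A : algebra) (xs : seq nat) (phi : formula) (u : nat -> A) :
  sat u (close xs phi) <-> forall w, (forall n, n \notin xs -> w n = u n) -> sat w phi.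
Proof.
elim: xs u => [|x xs IH] u /=.
  split=> [u_phi w wu | ]; last by apply.
  by have -> : w = u by apply: funext => n; exact: wu.
split=> [u_phi w wu | all_w b].
- apply: ((IH _).1 (u_phi (w x))) => n n_xs; rewrite /upd; case: eqP => [-> //|/eqP n_x].
  by apply: wu; rewrite in_cons negb_or n_x.
- apply/IH => w wu; apply: all_w => n; rewrite in_cons negb_or => /andP [n_x n_xs].
  by rewrite wu // /upd (negbTE n_x).
Qed.

Lemma close_universal (xs : seq nat) (phi : formula) : qfree phi -> universal (close xs phi).
Proof. by move=> qf; elim: xs => [|x xs IH] /=; [exact: univ_qf | exact: univ_all]. Qed.

Lemma close_fv (xs : seq nat) (phi : formula) (P : nat -> Prop) :
  fv_in (fun n => n \in xs \/ P n) phi -> fv_in P (close xs phi).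
Proof.
elim: xs P => [|x xs IH] P /= phi_fv; first by apply: fv_in_mono phi_fv => n [].
apply: IH; apply: fv_in_mono phi_fv => n; rewrite in_cons => -[/orP [/eqP ->|]|]; tauto.
Qed.

Lemma closure_above (phi : formula) (k : nat) : qfree phi ->
  exists psi : formula, [/\ universal psi, fv_in (fun n => n < k) psi &
    forall (A : algebra) (w : nat -> A),
      sat w psi <-> forall v, (forall n, n < k -> v n = w n) -> sat v phi].
Proof.
move=> qf; have [K phi_K] := qfree_bound qf.
exists (close (iota k K) phi); split; first exact: close_universal.
  apply: close_fv; apply: fv_in_mono phi_K => n n_K; rewrite mem_iota.
  by case: (ltnP n k) => _; [right | left; rewrite ltn_addl].
move=> A w; rewrite sat_close; split=> [all_w v vw | all_v w' w'w].
- pose w' n := if n \in iota k K then v n else w n.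
  have w'_phi : sat w' phi by apply: all_w => n; rewrite /w' => /negbTE ->.
  apply: ((sat_coinc_qf qf phi_K (u := w') (w := v) _).1 w'_phi) => n n_K.
  rewrite /w' mem_iota; case: (ltnP n k) => [n_k|_] /=; first by rewrite vw.
  by rewrite ltn_addl.
- by apply: all_v => n n_k; apply: w'w; rewrite mem_iota negb_and -ltnNge n_k.
Qed.

Definition big_and (l : list formula) : formula := foldr (@FAnd L) (FNot (FFalse L)) l.

Lemma big_and_qfree (l : list formula) : List.Forall (@qfree L) l -> qfree (big_and l).
Proof. by elim=> //= phi {}l qf _ IH. Qed.

Lemma sat_big_and (A : algebra) (w : nat -> A) (l : list formula) :
  sat w (big_and l) <-> List.Forall (sat w) l.
Proof.
elim: l => [|phi l IH] /=; first by split=> // _ [].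
by rewrite IH; split=> [[]|/List.Forall_cons_iff []]; [constructor|].
Qed.

Definition trunc4 (A : Type) (w : nat -> A) : nat -> A := val4 (w 0) (w 1) (w 2) (w 3).

Fixpoint trunc4_term (t : term) : term :=
  match t with
  | Var n => Var L (if n < 4 then n else 3)
  | App f args => App (fun i => trunc4_term (args i))
  end.

Lemma eval_trunc4_term (A : algebra) (w : nat -> A) (t : term) :
  eval w (trunc4_term t) = eval (trunc4 w) t.
Proof.
elim: t => [[|[|[|[|n]]]]|f args IH] //=.
by congr op; apply: funext => i; exact: IH.
Qed.

Lemma trunc4_term_vars (t : term) : term_vars_in (fun n => n < 4) (trunc4_term t).
Proof. by elim: t => [n|f args IH] /=; [case: ifP | exact: IH]. Qed.

Lemma same_eqs_trunc4 (A B : algebra) (u : nat -> A) (w : nat -> B) :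
  same_eqs u w -> same_eqs (trunc4 u) (trunc4 w).
Proof. by move=> uw s t; rewrite -!eval_trunc4_term. Qed.

End Formulas.

Section Ultraproduct.
Variables (L : signature) (I : Type) (F : set_system I).
Context {F_ultra : UltraFilter F}.
Variable N : I -> algebra L.

Lemma ultra_false (P : I -> Prop) : F P -> (forall i, ~ P i) -> False.
Proof. by move=> FP nP; apply: (filter_not_empty F); apply: filterS FP => i /nP. Qed.

Lemma ultra_not (P : I -> Prop) : ~ F P <-> F (fun i => ~ P i).
Proof.
split=> [nFP | FnP FP]; first by case: (in_ultra_setVsetC P F_ultra).
by apply: (ultra_false (filterI FP FnP)) => i [].
Qed.

Definition ueq (x y : forall i, N i) : Prop := F (fun i => x i = y i).

Lemma ueq_sym x y : ueq x y -> ueq y x.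
Proof. exact: filterS. Qed.

Lemma ueq_trans x y z : ueq x y -> ueq y z -> ueq x z.
Proof. by move=> xy yz; apply: filterS (filterI xy yz) => i [-> ->]. Qed.

Definition uclass := {P : (forall i, N i) -> Prop | exists x, P = ueq x}.

Definition ucls (x : forall i, N i) : uclass := exist _ (ueq x) (ex_intro _ x erefl).

Definition urep (p : uclass) : forall i, N i := sval (cid (svalP p)).

Lemma ucls_eq x y : ucls x = ucls y <-> ueq x y.
Proof.
split=> [xy | xy].
  apply: ueq_sym; rewrite -[ueq y]/(sval (ucls y)) -xy /=.
  exact: filterS filterT.
apply: eq_exist; apply: funext => z; apply: propext.
by split; apply: ueq_trans; [exact: ueq_sym|].
Qed.

Lemma urepK (p : uclass) : ucls (urep p) = p.
Proof.
case: p => P P_cls; rewrite /urep /=; case: cid => x /= Px.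
exact: eq_exist (esym Px).
Qed.

Definition ultraproduct : algebra L :=
  @Algebra L uclass (fun f args => ucls (fun i => op (fun j => urep (args j) i))).

Lemma ultraproduct_op (f : sym L) (xs : 'I_(ar f) -> forall i, N i) :
  op (a := ultraproduct) (fun j => ucls (xs j)) = ucls (fun i => op (fun j => xs j i)).
Proof.
apply/ucls_eq; have rep_xs j : ueq (urep (ucls (xs j))) (xs j).
  by apply/ucls_eq; rewrite urepK.
apply: filterS (filter_forall _ rep_xs) => i /= xs_i.
by congr op; apply: funext => j; exact: xs_i.
Qed.

Lemma ultraproduct_eval (u : nat -> forall i, N i) (t : term L) :
  eval (A := ultraproduct) (fun n => ucls (u n)) t = ucls (fun i => eval (fun n => u n i) t).
Proof.
elim: t => [n|f args IH] //.
rewrite (_ : eval _ (App args) =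
  op (fun j => eval (A := ultraproduct) (fun n => ucls (u n)) (args j))) //.
by rewrite (funext IH) ultraproduct_op.
Qed.

Lemma ucls_upd (u : nat -> forall i, N i) (x : nat) (a : forall i, N i) :
  upd (fun n => ucls (u n)) x (ucls a) = (fun n => ucls (upd u x a n)).
Proof. by apply: funext => n; rewrite /upd; case: (n == x). Qed.

Lemma upd_at (u : nat -> forall i, N i) (x : nat) (a : forall i, N i) (i : I) :
  (fun n => upd u x a n i) = upd (fun n => u n i) x (a i).
Proof. by apply: funext => n; rewrite /upd; case: (n == x). Qed.

Lemma choose_witnesses (d : forall i, N i) (P : forall i, N i -> Prop) :
  exists a : forall i, N i, forall i, (exists b, P i b) -> P i (a i).
Proof.
exists (fun i => if pselect (exists b, P i b) is left ex then sval (cid ex) else d i).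
by move=> i ex; case: pselect => [ex'|/(_ ex) //]; exact: svalP (cid ex').
Qed.

Theorem los (phi : formula L) (u : nat -> forall i, N i) :
  sat (A := ultraproduct) (fun n => ucls (u n)) phi <->
  F (fun i => sat (fun n => u n i) phi).
Proof.
elim: phi u => [s t||p IH|p IHp q IHq|p IHp q IHq|p IHp q IHq|x p IH|x p IH] u /=.
- by rewrite !ultraproduct_eval ucls_eq.
- by split=> [[] | F_false]; exact: ultra_false F_false (fun _ => id).
- by rewrite IH ultra_not.
- rewrite IHp IHq; split=> [[Fp Fq] | Fpq]; first exact: filterI.
  by split; apply: filterS Fpq => i [].
- rewrite IHp IHq; split=> [[Fp | Fq] | Fpq].
  + by apply: filterS Fp => i; left.
  + by apply: filterS Fq => i; right.
  + case: (in_ultra_setVsetC (fun i => sat (fun n => u n i) p) F_ultra) => [Fp | Fnp].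
      by left.
    by right; apply: filterS (filterI Fpq Fnp) => i [[p_i|q_i] np_i].
- rewrite IHp IHq; split=> [Fpq | Fpq Fp]; last first.
    by apply: filterS (filterI Fpq Fp) => i [/[apply]].
  case: (in_ultra_setVsetC (fun i => sat (fun n => u n i) p) F_ultra) => [/Fpq | Fnp].
    by apply: filterS => i ? _.
  by apply: filterS Fnp => i np /np.
- split=> [all_a | F_all a]; last first.
    by rewrite -(urepK a) ucls_upd IH; apply: filterS F_all => i; rewrite upd_at.
  apply: contrapT => /ultra_not F_ex.
  have [a a_spec] := choose_witnesses (u 0) (fun i b => ~ sat (upd (fun n => u n i) x b) p).
  have := all_a (ucls a); rewrite ucls_upd IH => Fa.
  apply: (ultra_false (filterI Fa F_ex)) => i [].
  rewrite upd_at => sat_a not_all; apply: (a_spec i) sat_a.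
  apply: contrapT => none; apply: not_all => b.
  by apply: contrapT => nb; apply: none; exists b.
- split=> [[a] | F_ex].
    by rewrite -(urepK a) ucls_upd IH; apply: filterS => i; rewrite upd_at; exists (urep a i).
  have [a a_spec] := choose_witnesses (u 0) (fun i b => sat (upd (fun n => u n i) x b) p).
  by exists (ucls a); rewrite ucls_upd IH; apply: filterS F_ex => i /a_spec; rewrite upd_at.
Qed.

Lemma ultraproduct_models (T : theory L) :
  (forall i, models (N i) T) -> models ultraproduct T.
Proof.
move=> N_T phi T_phi w.
have -> : w = fun n => ucls (urep (w n)) by apply: funext => n; rewrite urepK.
by apply/los; apply: filterS filterT => i _; exact: N_T.
Qed.

End Ultraproduct.

Lemma ultrafilter_finite_subsets (X : Type) (P : X -> Prop) :
  exists F : set_system {l : list X | List.Forall P l},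
    UltraFilter F /\ forall x, P x -> F (fun i => List.In x (sval i)).
Proof.
pose F0 (A : set {l : list X | List.Forall P l}) := exists l : list X, List.Forall P l /\
  forall i, (forall x, List.In x l -> List.In x (sval i)) -> A i.
have F0_proper : ProperFilter F0.
  apply: Build_ProperFilter_ex.
    by move=> A [l [Pl l_A]]; exists (exist _ l Pl); exact: l_A.
  split.
  - by exists nil.
  - move=> A B [l1 [P1 l1_A]] [l2 [P2 l2_B]]; exists (l1 ++ l2).
    split=> [|i i_l]; first exact/List.Forall_app.
    by split; [apply: l1_A | apply: l2_B] => x x_l; apply: i_l; apply: List.in_or_app; tauto.
  - by move=> A B AB [l [Pl l_A]]; exists l; split=> // i /l_A /AB.
have [F [F_ultra F0F]] := ultraFilterLemma F0_proper.
exists F; split=> // x Px; apply: F0F; exists [:: x]; split; first by constructor.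
by move=> i; apply; left.
Qed.

Section Compactness.
Variable L : signature.
Notation algebra := (algebra L).
Notation formula := (formula L).

Theorem compactness (T : theory L) (Gamma : formula -> Prop) :
  (forall l, List.Forall Gamma l ->
     exists (N : algebra) (w : nat -> N), models N T /\ List.Forall (sat w) l) ->
  exists (N : algebra) (w : nat -> N), models N T /\ forall phi, Gamma phi -> sat w phi.
Proof.
move=> fin_sat; have [F [F_ultra F_Gamma]] := ultrafilter_finite_subsets Gamma.
have pick (i : {l | List.Forall Gamma l}) : {p : {N : algebra & nat -> N} |
    models (projT1 p) T /\ List.Forall (sat (projT2 p)) (sval i)}.
  by apply: cid; have [N [w Nw]] := fin_sat _ (svalP i); exists (existT _ N w).
pose N i := projT1 (sval (pick i)).
pose w n i : N i := projT2 (sval (pick i)) n.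
exists (ultraproduct F N), (fun n => ucls F (w n)); split.
  by apply: ultraproduct_models => i; case: (svalP (pick i)).
move=> phi /F_Gamma F_phi; apply/los; apply: filterS F_phi => i.
by case: (svalP (pick i)) => _ /List.Forall_forall; apply.
Qed.

(* Models of the universal consequences of [T] embed in models of [T]; here
   only the part of the diagram named by [v] is needed. *)
Lemma exists_model_same_eqs (T : theory L) (B : algebra) (v : nat -> B) :
  (forall psi, sentence psi -> universal psi -> entails T psi ->
     forall u : nat -> B, sat u psi) ->
  exists (N : algebra) (w : nat -> N), models N T /\ same_eqs v w.
Proof.
move=> B_univ.
have [N [w [NT v_w]]] : exists (N : algebra) (w : nat -> N),
    models N T /\ forall phi, qfree phi /\ sat v phi -> sat w phi.
  apply: compactness => l l_diag; apply: contrapT => unsat.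
  have [qf_l sat_l] : List.Forall (@qfree L) l /\ List.Forall (sat v) l.
    by split; apply: List.Forall_impl l_diag => phi [].
  have qf_not_l : qfree (FNot (big_and l)) := big_and_qfree qf_l.
  have [psi [psi_univ psi_fv psi_sat]] := closure_above 0 qf_not_l.
  have psi_sentence : sentence psi by apply: fv_in_mono psi_fv.
  have : sat v psi.
    apply: B_univ => // N' N'T u; apply/psi_sat => v' _ /sat_big_and sat_v'.
    by apply: unsat; exists N', v'.
  by move/psi_sat/(_ v (fun _ _ => erefl)); apply; exact/sat_big_and.
exists N, w; split=> // s t; split=> [st | wst]; first exact: (v_w (FEq s t)).
by apply: contrapT => nst; exact: (v_w (FNot (FEq s t))).
Qed.

End Compactness.

Section PrincipalCongruences.
Variable L : signature.
Notation algebra := (algebra L).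
Notation term := (term L).
Notation formula := (formula L).

Variable V : algebra -> Prop.
Hypothesis V_variety : is_variety V.
Hypothesis V_CD : congruence_distributive V.
Hypothesis V_CEP : CEP V.

Variable xi : formula.
Hypothesis xi_qf : qfree xi.
Hypothesis xi_Cg : forall A : algebra, V A -> forall a1 a2 b1 b2 : A,
  Cg b1 b2 a1 a2 <->
  (forall (B : algebra) (h : A -> B), V B -> embedding h ->
     forall v : nat -> B, v 0 = h a1 -> v 1 = h a2 -> v 2 = h b1 -> v 3 = h b2 ->
       sat v xi).

Variable T : theory L.
Hypothesis T_univ : forall phi, sentence phi -> universal phi ->
  (entails (Th V) phi <-> entails T phi).
Hypothesis T_diag : forall M : algebra, models M (Th V) ->
  forall (phi : formula) (v : nat -> M),
    (forall (N : algebra) (e : M -> N), models N T -> embedding e ->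
       sat (fun n => e (v n)) phi) \/
    (forall (N : algebra) (e : M -> N), models N T -> embedding e ->
       ~ sat (fun n => e (v n)) phi).

Definition in_Cg4 (A : algebra) (a : nat -> A) : Prop := Cg (a 2) (a 3) (a 0) (a 1).

Definition xi_all (A : algebra) (w : nat -> A) : Prop :=
  forall v : nat -> A, (forall n, n < 4 -> v n = w n) -> sat v xi.

Definition Cg4_eq (s t : term) : Prop :=
  forall (A : algebra) (a : nat -> A), V A -> in_Cg4 a -> eval a s = eval a t.

Lemma xi_all_ext (A : algebra) (w w' : nat -> A) :
  (forall n, n < 4 -> w n = w' n) -> xi_all w -> xi_all w'.
Proof. by move=> ww' w_xi v vw'; apply: w_xi => n n4; rewrite vw' ?ww'. Qed.

Lemma xi_all_definable : exists Phi : formula,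
  forall (A : algebra) (w : nat -> A), sat w Phi <-> xi_all w.
Proof. by have [Phi [_ _ Phi_xi]] := closure_above 4 xi_qf; exists Phi. Qed.

Lemma in_Cg4_iff_ext (A : algebra) (a : nat -> A) : V A ->
  in_Cg4 a <-> forall (B : algebra) (h : A -> B), V B -> embedding h -> xi_all (h \o a).
Proof.
move=> VA; rewrite /in_Cg4 xi_Cg //.
split=> ext B h VB h_emb v; move/(_ B h VB h_emb): ext => ext.
  by move=> va; apply: ext; rewrite va.
by move=> v0 v1 v2 v3; apply: ext => -[|[|[|[|n]]]].
Qed.

Lemma xi_all_of_Cg4 (A : algebra) (a : nat -> A) : V A -> in_Cg4 a -> xi_all a.
Proof.
move=> VA /(in_Cg4_iff_ext _ VA) ext; apply: (ext A id VA).
by split=> // x y.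
Qed.

Lemma V_models_Th (A : algebra) : V A -> models A (Th V).
Proof. by move=> VA phi [_ phi_V] v; exact: phi_V. Qed.

Lemma models_T_V (N : algebra) : models N T -> V N.
Proof.
have [E VE] := V_variety; move=> NT; apply/VE => e Ee v.
have eq_qf : qfree (FEq e.1 e.2) by [].
have [psi [psi_univ psi_fv psi_sat]] := closure_above 0 eq_qf.
have psi_sentence : sentence psi by apply: fv_in_mono psi_fv.
have V_psi : entails (Th V) psi.
  move=> A A_Th u; apply: A_Th; split=> // B VB u'.
  by apply/psi_sat => w _; exact: (VE B).1 VB e Ee w.
by move: ((T_univ psi_sentence psi_univ).1 V_psi N NT v) => /psi_sat; apply.
Qed.

Lemma exists_T_model (B : algebra) (v : nat -> B) : V B ->
  exists (N : algebra) (w : nat -> N), models N T /\ same_eqs v w.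
Proof.
move=> VB; apply: exists_model_same_eqs => psi psi_sentence psi_univ T_psi.
exact: (T_univ psi_sentence psi_univ).2 T_psi B (V_models_Th VB).
Qed.

(* The subalgebra generated by [w] embeds in both models, and [T] plus its
   diagram is complete. *)
Lemma xi_all_same_eqs (N N' : algebra) (w : nat -> N) (w' : nat -> N') :
  models N T -> models N' T -> same_eqs w w' -> xi_all w -> xi_all w'.
Proof.
move=> NT N'T ww' w_xi; have [Phi Phi_xi] := xi_all_definable.
have VM : V (gen_alg w) := variety_sub V_variety (models_T_V NT) (gen_val_emb w).
have [e [e_emb e_var]] := gen_lift_emb ww'.
case: (T_diag (V_models_Th VM) Phi (gen_var w)) => [all_N | no_N].
  by move/Phi_xi: (all_N N' e N'T e_emb); apply: xi_all_ext => n _.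
by case: (no_N N _ NT (gen_val_emb w)); apply/Phi_xi.
Qed.

Lemma Cg4_iff_xi_all (A N : algebra) (a : nat -> A) (w : nat -> N) :
  V A -> models N T -> same_eqs a w -> (in_Cg4 a <-> xi_all w).
Proof.
move=> VA NT aw; split=> [a_Cg | w_xi].
  apply: xi_all_of_Cg4 (models_T_V NT) _.
  exact: (Cg_transfer V_CEP VA (fun s t => (aw s t).1) a_Cg).
apply/(in_Cg4_iff_ext _ VA) => B h VB h_emb v va.
have [N' [w' [N'T vw']]] := exists_T_model v VB.
have trunc_v : trunc4 v = h \o trunc4 a by apply: funext => -[|[|[|n]]] /=; rewrite va.
have w_w' : same_eqs (trunc4 w) (trunc4 w').
  move=> s t; rewrite -(same_eqs_trunc4 aw) (same_eqs_emb _ h_emb) -trunc_v.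
  exact: same_eqs_trunc4 vw' s t.
have w'_xi : xi_all w'.
  apply: (xi_all_ext (w := trunc4 w')); first by case=> [|[|[|[|n]]]].
  apply: xi_all_same_eqs NT N'T w_w' _.
  by apply: xi_all_ext w_xi; case=> [|[|[|[|n]]]].
by apply/(sat_qf_same_eqs xi_qf vw'); apply: w'_xi.
Qed.

Lemma Cg4_separating (l : list formula) : exists (A : algebra) (a : nat -> A),
  [/\ V A, in_Cg4 a &
    forall s t, ~ Cg4_eq s t -> List.In (FNot (FEq s t)) l -> eval a s <> eval a t].
Proof.
elim: l => [|phi l [A1 [a1 [VA1 a1_Cg a1_sep]]]].
  by exists (trivial_alg L), (fun=> tt); split=> //; exact: variety_trivial.
have [[s [t [-> nst]]] | not_sep] :=
  pselect (exists s t, phi = FNot (FEq s t) /\ ~ Cg4_eq s t); last first.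
  exists A1, a1; split=> // s t nst [phi_st|]; last exact: a1_sep.
  by case: not_sep; exists s, t.
have [A2 [a2 [VA2 a2_Cg a2_st]]] :
    exists (A2 : algebra) (a2 : nat -> A2), [/\ V A2, in_Cg4 a2 & eval a2 s <> eval a2 t].
  apply: contrapT => none; apply: nst => A2 a2 VA2 a2_Cg; apply: contrapT => a2_st.
  by apply: none; exists A2, a2.
have VA := variety_prod V_variety VA1 VA2.
exists (prod_alg A1 A2), (fun n => (a1 n, a2 n)); split=> //.
  exact: (prod_Cg (V_CD VA) a1_Cg a2_Cg).
move=> s' t' nst' [[<- <-]|in_l]; rewrite !eval_prod => -[].
  by move=> _; exact: a2_st.
by move=> st' _; exact: a1_sep nst' in_l st'.
Qed.

Lemma generic_Cg4 : exists (G : algebra) (g : nat -> G),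
  [/\ V G, in_Cg4 g & forall s t, eval g s = eval g t -> Cg4_eq s t].
Proof.
have [Phi Phi_xi] := xi_all_definable.
pose Gamma phi := phi = Phi \/ exists s t, ~ Cg4_eq s t /\ phi = FNot (FEq s t).
have [G [g [GT g_Gamma]]] : exists (G : algebra) (g : nat -> G),
    models G T /\ forall phi, Gamma phi -> sat g phi.
  apply: compactness => l l_Gamma.
  have [A [a [VA a_Cg a_sep]]] := Cg4_separating l.
  have [N [w [NT aw]]] := exists_T_model a VA.
  exists N, w; split=> //; apply/List.Forall_forall => phi phi_l.
  case: ((List.Forall_forall _ _).1 l_Gamma phi phi_l) => [-> | [s [t [nst phi_st]]]].
    by apply/Phi_xi; apply/(Cg4_iff_xi_all VA NT aw).
  by rewrite phi_st in phi_l *; move=> /aw; exact: a_sep nst phi_l.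
have VG := models_T_V GT.
exists G, g; split=> //.
  apply/(Cg4_iff_xi_all VG GT (fun s t => iff_refl _)); apply/Phi_xi.
  by apply: g_Gamma; left.
move=> s t st; apply: contrapT => nst.
by apply: (g_Gamma (FNot (FEq s t))) st; right; exists s, t.
Qed.

Lemma Cg4_of_Cg4_eqs (A : algebra) (a : nat -> A) :
  V A -> (forall s t, Cg4_eq s t -> eval a s = eval a t) -> in_Cg4 a.
Proof.
move=> VA a_eqs; have [G [g [VG g_Cg g_eqs]]] := generic_Cg4.
by apply: (Cg_transfer V_CEP VG _ g_Cg) => s t /g_eqs; exact: a_eqs.
Qed.

Definition eq_pairs (l : list formula) : list (term * term) :=
  List.flat_map (fun phi => if phi is FEq s t then [:: (s, t)] else [::]) l.

Lemma in_eq_pairs (l : list formula) (s t : term) :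
  List.In (s, t) (eq_pairs l) <-> List.In (FEq s t) l.
Proof.
rewrite List.in_flat_map; split=> [[phi [phi_l]] | st_l].
  by case: phi phi_l => // s' t' st_l [[<- <-] | []].
by exists (FEq s t); split=> //; left.
Qed.

Lemma Cg4_finite_basis : exists al : list (term * term),
  List.Forall (fun e => Cg4_eq e.1 e.2) al /\
  forall (A : algebra) (a : nat -> A), V A ->
    List.Forall (fun e => eval a e.1 = eval a e.2) al -> in_Cg4 a.
Proof.
have [Phi Phi_xi] := xi_all_definable.
pose Gamma phi := phi = FNot Phi \/ exists s t, Cg4_eq s t /\ phi = FEq s t.
have [l [l_Gamma l_unsat]] : exists l, List.Forall Gamma l /\
    forall (N : algebra) (w : nat -> N), models N T -> ~ List.Forall (sat w) l.
  apply: contrapT => fin_sat.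
  have [N [w [NT w_Gamma]]] : exists (N : algebra) (w : nat -> N),
      models N T /\ forall phi, Gamma phi -> sat w phi.
    apply: compactness => l l_Gamma; apply: contrapT => unsat.
    by apply: fin_sat; exists l; split=> // N w NT l_w; apply: unsat; exists N, w.
  have VN := models_T_V NT.
  have w_Cg : in_Cg4 w.
    by apply: Cg4_of_Cg4_eqs => // s t st; apply: (w_Gamma (FEq s t)); right; exists s, t.
  move/(Cg4_iff_xi_all VN NT (fun s t => iff_refl _))/Phi_xi: w_Cg.
  exact: (w_Gamma (FNot Phi) (or_introl erefl)).
have l_Gamma' := (List.Forall_forall _ _).1 l_Gamma.
exists (eq_pairs l); split.
  by apply/List.Forall_forall => -[s t] /in_eq_pairs /l_Gamma' [//|[s' [t' [st' [-> ->]]]]].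
move=> A a VA a_eqs; apply: contrapT => a_nCg.
have [N [w [NT aw]]] := exists_T_model a VA.
apply: (l_unsat N w NT); apply/List.Forall_forall => phi phi_l.
case: (l_Gamma' phi phi_l) => [-> | [s [t [_ phi_st]]]].
  by move=> /Phi_xi /(Cg4_iff_xi_all VA NT aw).
rewrite phi_st in phi_l *; apply/aw.
by apply: (List.Forall_forall _ _).1 a_eqs (s, t) _; apply/in_eq_pairs.
Qed.

End PrincipalCongruences.

Theorem proposition5p4 (L : signature) (Hconst : exists c : sym L, ar c = 0)
  (V : algebra L -> Prop) (HV : is_variety V)
  (HCD : congruence_distributive V) (HCEP : CEP V) (HPDPC : PDPC V)
  (HMC : exists Tstar : theory L, model_completion (Th V) Tstar) :
  EDPC V.
Proof.
have [xi [xi_qf xi_Cg]] := HPDPC.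
have [T [_ _ T_univ T_diag]] := HMC.
have [al [al_Cg al_basis]] := Cg4_finite_basis HV HCD HCEP xi_qf xi_Cg T_univ T_diag.
exists (List.map (fun e => (trunc4_term e.1, trunc4_term e.2)) al); split.
  apply/List.Forall_map; apply: List.Forall_impl al_Cg => e _.
  by split; exact: trunc4_term_vars.
move=> A VA a1 a2 b1 b2; set a := val4 a1 a2 b1 b2.
have eval_a t : eval a (trunc4_term t) = eval a t.
  by rewrite eval_trunc4_term; congr eval; apply: funext => -[|[|[|n]]].
rewrite List.Forall_map; split=> [ab | al_a].
  by apply: List.Forall_impl al_Cg => e e_Cg /=; rewrite !eval_a; exact: e_Cg.
by apply: (al_basis A a VA); apply: List.Forall_impl al_a => e /=; rewrite !eval_a.
Qed.
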